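(* Let $G$ be a bipartite cactus graph with $n\ge 4$ vertices, $m$ edges and $b$ bridges. Then $m\le 2\left\lfloor \frac{2(n-1-b)}{3}\right\rfloor + b$.
   Context: A cactus graph is a connected simple graph in which every edge belongs to at most one cycle; a bi-cactus is a cactus that is also bipartite. A bridge is an edge whose removal disconnects the graph. *)

From mathcomp Require Import all_boot.
Set Implicit Arguments. Unset Strict Implicit. Unset Printing Implicit Defensive.

Section Graphs.
Variable T : finType.

Definition simple_graph (e : rel T) : Prop := symmetric e /\ irreflexive e.

Definition edges (e : rel T) : {set {set T}} :=
  [set [set x; y] | x in T, y in T & e x y].

Definition connected_graph (e : rel T) : Prop := forall x y, connect e x y.

Definition is_cycle (e : rel T) (s : seq T) : bool :=
  [&& uniq s, 3 <= size s & cycle e s].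

Definition cycle_edges (s : seq T) : {set {set T}} :=
  [set [set x; next s x] | x in s].

Definition cactus (e : rel T) : Prop :=
  connected_graph e /\
  forall s1 s2, is_cycle e s1 -> is_cycle e s2 ->
    forall E0, E0 \in cycle_edges s1 -> E0 \in cycle_edges s2 ->
      cycle_edges s1 = cycle_edges s2.

Definition bipartite (e : rel T) : Prop :=
  exists f : T -> bool, forall x y, e x y -> f x != f y.

Definition remove_edge (e : rel T) (E0 : {set T}) : rel T :=
  fun u v => e u v && ([set u; v] != E0).

Definition is_bridge (e : rel T) (E0 : {set T}) : bool :=
  (E0 \in edges e) && [exists u, exists v, ~~ connect (remove_edge e E0) u v].

Definition bridges (e : rel T) : {set {set T}} :=
  [set E0 in edges e | is_bridge e E0].

End Graphs.

From mathcomp Require Import all_boot zify boolp.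
Set Implicit Arguments. Unset Strict Implicit. Unset Printing Implicit Defensive.

(* In a connected graph an edge is a non-bridge exactly when it lies on a
   cycle, and in a cactus distinct cycles share no edge, so the m - b
   non-bridges split into the edge sets of the c cycles; bipartiteness makes
   every cycle even, hence of length at least 4, so 4c <= m - b and m - b is
   even.  Deleting one edge from each cycle leaves a forest, which has at most
   n - 1 edges: m - c <= n - 1.  Together, 3(m - b)/4 <= n - 1 - b, and
   evenness of m - b gives m - b <= 2 floor(2(n - 1 - b)/3). *)

Lemma small_transversal (A : finType) (P : {set {set A}}) :
  set0 \notin P ->
  exists2 X : {set A}, #|X| <= #|P| & forall B, B \in P -> exists2 x, x \in X & x \in B.
Proof.
move=> set0NP; have [->|[B0 B0P]] := set_0Vmem P.
  by exists set0 => [|B]; rewrite ?cards0 ?inE.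
have [B0_0|[x0 _]] := set_0Vmem B0; first by rewrite -B0_0 B0P in set0NP.
exists [set odflt x0 [pick x in B] | B : {set A} in P] => [|B BP]; first exact: leq_imset_card.
have [x xB] : exists x, x \in B by apply/set0Pn; apply: contraNneq set0NP => <-.
exists (odflt x0 [pick y in B]); first exact: imset_f.
by case: pickP => [y //|/(_ x)]; rewrite xB.
Qed.

Section Graph.
Variable T : finType.
Implicit Types (h : rel T) (s p : seq T) (x y z u v w : T) (R : {set {set T}}).

Definition remove_edges h (R : {set {set T}}) : rel T :=
  fun u v => h u v && ([set u; v] \notin R).

Definition acyclic h := forall s, ~~ is_cycle h s.

Definition nonisolated h : {set T} := [set x | [exists y, h x y]].

Lemma eq_set2 (a b c d : T) :
  [set a; b] = [set c; d] -> (a = c /\ b = d) \/ (a = d /\ b = c).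
Proof.
move=> E.
have /set2P ha : a \in [set c; d] by rewrite -E set21.
have /set2P hb : b \in [set c; d] by rewrite -E set22.
have /set2P hc : c \in [set a; b] by rewrite E set21.
have /set2P hd : d \in [set a; b] by rewrite E set22.
by case: ha hb hc hd => ha [] hb [] hc [] hd; subst; auto.
Qed.

Lemma edgesP h E :
  reflect (exists x y, h x y /\ E = [set x; y]) (E \in edges h).
Proof.
apply: (iffP imset2P) => [[x y _]|[x [y [hxy ->]]]].
  by rewrite inE => hxy ->; exists x, y.
by exists x y; rewrite ?inE.
Qed.

Lemma edges_remove_edges h R : edges (remove_edges h R) = edges h :\: R.
Proof.
apply/setP=> E; rewrite in_setD; apply/edgesP/andP.
  move=> [x [y [/andP[hxy xyR] ->]]]; split=> //.
  by apply/edgesP; exists x, y.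
move=> [ER /edgesP [x [y [hxy Exy]]]]; exists x, y.
by rewrite /remove_edges hxy -Exy.
Qed.

Lemma remove_edges_sym h R : symmetric h -> symmetric (remove_edges h R).
Proof. by move=> hs u v; rewrite /remove_edges hs setUC. Qed.

Lemma remove_edges_irr h R : irreflexive h -> irreflexive (remove_edges h R).
Proof. by move=> hi u; rewrite /remove_edges hi. Qed.

Lemma remove_edge_sym h E : symmetric h -> symmetric (remove_edge h E).
Proof. by move=> hs u v; rewrite /remove_edge hs setUC. Qed.

Lemma sub_is_cycle h h' s : subrel h' h -> is_cycle h' s -> is_cycle h s.
Proof. by move=> sub /and3P[us ss cs]; rewrite /is_cycle us ss (sub_cycle sub cs). Qed.

Lemma acyclic_remove_edges h R :
  (forall s, is_cycle h s -> exists2 E, E \in R & E \in cycle_edges s) ->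
  acyclic (remove_edges h R).
Proof.
move=> hitR s; apply/negP=> cs.
have [|E ER /imsetP[x xs Ex]] := hitR s.
  by apply: sub_is_cycle cs => u v /andP[].
case/and3P: cs => _ _ /next_cycle/(_ xs).
by rewrite /remove_edges -Ex ER andbF.
Qed.

Lemma next_next_neq s x : uniq s -> 3 <= size s -> x \in s -> next s (next s x) != x.
Proof.
move=> us ss xs; case: (rot_to xs) => i s' def_s.
have us' : uniq (x :: s') by rewrite -def_s rot_uniq.
have : 3 <= size (x :: s') by rewrite -def_s size_rot.
rewrite -!(next_rot i us) def_s {def_s}.
case: s' us' => [|y [|z t]] //= /and3P[]; rewrite !inE !negb_or.
move=> /and3P[xy xz _] /andP[yz _] _ _.
by rewrite eqxx [y == x]eq_sym (negbTE xy) eqxx eq_sym.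
Qed.

Lemma card_cycle_edges s : uniq s -> 3 <= size s -> #|cycle_edges s| = size s.
Proof.
move=> us ss; rewrite card_in_imset; first exact/card_uniqP.
move=> x y xs ys /eq_set2[[]//|[xny nxy]].
by have := next_next_neq us ss ys; rewrite -xny nxy eqxx.
Qed.

Lemma cycle_edges_sub h s : cycle h s -> cycle_edges s \subset edges h.
Proof.
move=> cs; apply/subsetP => E /imsetP[x xs ->]; apply/edgesP.
by exists x, (next s x); split=> //; apply: next_cycle cs xs.
Qed.

Lemma bipartite_path_color h (f : T -> bool) :
  (forall x y, h x y -> f x != f y) ->
  forall x p, path h x p -> f (last x p) = f x (+) odd (size p).
Proof.
move=> hf x p; elim: p x => [|y p IHp] x /=; first by rewrite addbF.
case/andP=> /hf fxy /IHp->.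
have -> : f y = ~~ f x by move: fxy; case: (f x); case: (f y).
by rewrite addNb addbN.
Qed.

Lemma bipartite_cycle_even h (f : T -> bool) s :
  (forall x y, h x y -> f x != f y) -> cycle h s -> ~~ odd (size s).
Proof.
move=> hf; case: s => [|x p] //= /(bipartite_path_color hf).
by rewrite last_rcons size_rcons /=; case: (f x); case: (odd _).
Qed.

Lemma acyclic_path_chord h x q z v :
  acyclic h -> uniq (x :: rcons q z) -> path h x (rcons q z) -> h z v ->
  v \in x :: q -> v = last x q.
Proof.
move=> ac uq hq hzv vq; case/splitPl: vq uq hq => q1 q2 def_v.
rewrite rcons_cat cat_path -cat_cons cat_uniq last_cat def_v.
move=> /and3P[_ disj uq2] /andP[_ hq2]; apply/eqP/negP=> /negP vNlast.
have vNq2 : v \notin rcons q2 z.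
  by apply: contra disj => vq2; apply/hasP; exists v; rewrite // -def_v mem_last.
move/negP: (ac (v :: rcons q2 z)); apply.
rewrite /is_cycle /= vNq2 uq2 size_rcons rcons_path hq2 last_rcons hzv andbT.
by case: q2 vNlast {disj hq2 uq2 vNq2} => /= [|]; rewrite ?eqxx.
Qed.

(* The end of a longest simple path is a leaf: another neighbour would either
   close a cycle or extend the path. *)
Lemma acyclic_leaf h x0 y0 :
  symmetric h -> irreflexive h -> acyclic h -> h x0 y0 ->
  exists z w, h z w /\ forall v, h z v -> v = w.
Proof.
move=> hs hi ac hxy0.
pose simple_path k := [exists x, exists p : k.-tuple T, uniq (x :: p) && path h x p].
have x0Ny0 : x0 != y0 by apply: contraTneq hxy0 => ->; rewrite hi.
have path1 : simple_path 1.
  by apply/existsP; exists x0; apply/existsP; exists [tuple y0]; rewrite /= inE x0Ny0 hxy0.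
have bounded k : simple_path k -> k <= #|T|.
  case/existsP=> x /existsP[p /andP[up _]].
  rewrite -(size_tuple p); have := max_card (mem (x :: p)); rewrite (card_uniqP up) /=; lia.
have [K /existsP[x /existsP[p uhp]] Kmax] := ex_maxnP (ex_intro (fun k => simple_path k) 1 path1) bounded.
have K_gt0 : 0 < K by apply: Kmax.
move: (size_tuple p) uhp; case/lastP: (tval p) => [|q z] sizeK /andP[up hp].
  by rewrite -sizeK in K_gt0.
have hqz : h (last x q) z by move: hp; rewrite rcons_path => /andP[].
exists z, (last x q); split=> [|v hzv]; first by rewrite hs.
have [vxq|vNxq] := boolP (v \in x :: q); first exact: acyclic_path_chord hzv vxq.
have [vz|vNz] := eqVneq v z; first by rewrite vz hi in hzv.
have sizeK1 : size (rcons (rcons q z) v) == K.+1 by rewrite size_rcons sizeK.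
suff /Kmax : simple_path K.+1 by rewrite ltnn.
apply/existsP; exists x; apply/existsP; exists (Tuple sizeK1).
change (uniq (x :: rcons (rcons q z) v) && path h x (rcons (rcons q z) v)).
rewrite -rcons_cons rcons_uniq up rcons_path hp last_rcons hzv andbT.
by rewrite -rcons_cons mem_rcons in_cons negb_or vNz vNxq.
Qed.

Lemma card_edges_remove_edges h R :
  #|edges h| - #|R| <= #|edges (remove_edges h R)|.
Proof. by rewrite edges_remove_edges cardsD leq_sub2l ?subset_leq_card ?subsetIr. Qed.

Lemma forest_card_edges h :
  symmetric h -> irreflexive h -> acyclic h -> #|edges h| <= #|nonisolated h| - 1.
Proof.
move: {2}#|edges h| (leqnn #|edges h|) => n; elim: n h => [|n IHn] h.
  by rewrite leqn0 => /eqP->.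
move=> le_h hs hi ac.
have [->|[E /edgesP[x0 [y0 [hxy0 _]]]]] := set_0Vmem (edges h); first by rewrite cards0.
have [z [w [hzw leaf_z]]] := acyclic_leaf hs hi ac hxy0.
pose h' := remove_edges h [set [set z; w]].
have zw_edge : [set z; w] \in edges h by apply/edgesP; exists z, w.
have card_h' : #|edges h'| = #|edges h| - 1.
  by rewrite edges_remove_edges cardsD (setIidPr _) ?sub1set // cards1.
have ac' : acyclic h'.
  by move=> s; apply: contra (ac s); apply: sub_is_cycle => u v /andP[].
have := IHn h' _ (remove_edges_sym _ hs) (remove_edges_irr _ hi) ac'.
have nonisolated_h' : nonisolated h' \subset nonisolated h :\ z.
  apply/subsetP=> u; rewrite !inE => /existsP[v /andP[huv uvNzw]].
  apply/andP; split; last by apply/existsP; exists v.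
  apply: contraNneq uvNzw => uz; move: huv; rewrite uz => /leaf_z->.
  exact: set11.
have zwN : [set z; w] \subset nonisolated h.
  apply/subsetP=> u /set2P[]->; rewrite inE; apply/existsP; first by exists w.
  by exists z; rewrite hs.
have z_nonisolated : z \in nonisolated h by apply: (subsetP zwN); apply: set21.
have zNw : z != w by apply: contraTneq hzw => ->; rewrite hi.
move: (subset_leq_card nonisolated_h') (subset_leq_card zwN).
rewrite cards2 zNw (cardsD1 z (nonisolated h)) z_nonisolated; lia.
Qed.

Section Cactus.
Variable e : rel T.
Hypotheses (e_sym : symmetric e) (e_irr : irreflexive e).

Lemma remove_edge_connect x y u v :
  connect (remove_edge e [set x; y]) x y -> connect e u v ->
  connect (remove_edge e [set x; y]) u v.
Proof.
move=> cxy; apply: connect_sub => a b eab.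
have [/eq_set2[[-> ->]|[-> ->]] // | abNxy] := eqVneq [set a; b] [set x; y].
  by rewrite (sym_connect_sym (remove_edge_sym _ e_sym)).
by apply: connect1; rewrite /remove_edge eab abNxy.
Qed.

Lemma cycle_edge_remove_connect s x :
  is_cycle e s -> x \in s -> connect (remove_edge e [set x; next s x]) x (next s x).
Proof.
case/and3P=> us ss cs xs; have [i s' def_s] := rot_to xs.
have : uniq (x :: s') by rewrite -def_s rot_uniq.
have : 3 <= size (x :: s') by rewrite -def_s size_rot.
have : cycle e (x :: s') by rewrite -def_s rot_cycle.
rewrite -(next_rot i us) def_s {def_s us ss cs xs}.
case: s' => [|y [|a q']] //; set q := a :: q'.
rewrite /= eqxx => /andP[_ hyq] _ /and3P[xNyq yNq _].
have : path e y (rcons q x) := hyq.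
rewrite rcons_path => /andP[hp hl].
rewrite (sym_connect_sym (remove_edge_sym _ e_sym)); apply/connectP.
exists (rcons q x); last by rewrite last_rcons.
rewrite rcons_path; apply/andP; split.
  apply: (sub_in_path (P := predC1 x) _ _ hp) => [u v|]; last first.
    by apply/allP=> u uyq; apply: contraNneq xNyq => <-.
  rewrite !inE => uNx vNx euv; rewrite /remove_edge euv.
  by apply/eqP=> /eq_set2[[ux _]|[_ vx]]; [move/eqP: uNx | move/eqP: vNx].
rewrite /remove_edge hl /=; apply/eqP=> /eq_set2[[lx _]|[ly _]].
  by move/negP: xNyq; apply; rewrite -lx in_cons mem_last orbT.
by move/negP: yNq; apply; rewrite -ly mem_last.
Qed.

Lemma cycle_edge_not_bridge s E :
  connected_graph e -> is_cycle e s -> E \in cycle_edges s -> ~~ is_bridge e E.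
Proof.
move=> conn cs /imsetP[x xs ->]; rewrite /is_bridge negb_and; apply/orP; right.
rewrite negb_exists; apply/forallP=> u; rewrite negb_exists; apply/forallP=> v.
by rewrite negbK (remove_edge_connect (cycle_edge_remove_connect cs xs)).
Qed.

Lemma nonbridge_on_cycle E :
  E \in edges e -> ~~ is_bridge e E ->
  exists2 s, is_cycle e s & E \in cycle_edges s.
Proof.
move=> Ee; case/edgesP: (Ee) => x [y [exy def_E]].
rewrite /is_bridge Ee /= {Ee} negb_exists => /forallP/(_ x).
rewrite negb_exists => /forallP/(_ y)/negPn/connectP[p pxy y_def].
move: y_def; case: (shortenP pxy) => {pxy} p hp up _ y_def; subst y E.
case: p hp up exy => [|a [|b p]] hp up exy; first by rewrite /= e_irr in exy.
  by move: hp; rewrite /= /remove_edge eqxx andbF.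
set p' := [:: a, b & p] in hp up exy *.
have hpe : path e x p' by apply: sub_path hp => u v /andP[].
exists (x :: p').
  rewrite /is_cycle up; have -> : cycle e (x :: p') = path e x (rcons p' x) by [].
  by rewrite rcons_path hpe e_sym exy.
apply/imsetP; exists (last x p'); first exact: mem_last.
by rewrite -(next_rotr 1 up) lastI rotr1_rcons /= eqxx setUC.
Qed.

Definition cycle_edge_sets : {set {set {set T}}} :=
  [set C | `[< exists2 s, is_cycle e s & cycle_edges s = C >]].

Lemma cycle_edge_setsP C :
  reflect (exists2 s, is_cycle e s & cycle_edges s = C) (C \in cycle_edge_sets).
Proof. by rewrite inE; apply: asboolP. Qed.

Lemma set0_notin_cycle_edge_sets : set0 \notin cycle_edge_sets.
Proof.
apply/negP=> /cycle_edge_setsP[s /and3P[us ss _] edges_s].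
by have := card_cycle_edges us ss; rewrite edges_s cards0 => size_s; rewrite -size_s in ss.
Qed.

Lemma card_nonbridges :
  cactus e -> #|edges e :\: bridges e| = \sum_(C in cycle_edge_sets) #|C|.
Proof.
move=> [conn cycles_disj].
have <- : cover cycle_edge_sets = edges e :\: bridges e.
  apply/setP=> E; apply/bigcupP/idP => [[C /cycle_edge_setsP[s cs <-] Es]|].
    have Ee : E \in edges e by case/and3P: cs => _ _ /cycle_edges_sub/subsetP; apply.
    by rewrite !inE Ee (negbTE (cycle_edge_not_bridge conn cs Es)).
  rewrite !inE => /andP[/nandP[/negP//|nb] Ee].
  have [s cs Es] := nonbridge_on_cycle Ee nb.
  by exists (cycle_edges s) => //; apply/cycle_edge_setsP; exists s.
apply/esym/eqP/trivIsetP => _ _ /cycle_edge_setsP[s1 cs1 <-] /cycle_edge_setsP[s2 cs2 <-].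
apply: contraNT => /pred0Pn[E /andP[Es1 Es2]].
by rewrite (cycles_disj s1 s2 cs1 cs2 E).
Qed.

Lemma bipartite_cycle_edge_set C :
  bipartite e -> C \in cycle_edge_sets -> 4 <= #|C| /\ 2 %| #|C|.
Proof.
move=> [f hf] /cycle_edge_setsP[s /and3P[us ss cs] <-].
rewrite card_cycle_edges // dvdn2; have := bipartite_cycle_even hf cs.
by case: (size s) ss => [|[|[|[|n]]]].
Qed.

End Cactus.

End Graph.

Lemma leq_double_div3 N c k :
  2 %| N -> 4 * c <= N -> N - c <= k -> N <= 2 * ((2 * k) %/ 3).
Proof. lia. Qed.

Theorem lemma4p8 (T : finType) (e : rel T) :
  simple_graph e -> cactus e -> bipartite e -> 4 <= #|T| ->
  #|edges e| <= 2 * ((2 * (#|T| - 1 - #|bridges e|)) %/ 3) + #|bridges e|.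
Proof.
move=> [e_sym e_irr] cac bip _.
have [R card_R R_hits] := small_transversal (set0_notin_cycle_edge_sets e).
have H_acyclic : acyclic (remove_edges e R).
  by apply: acyclic_remove_edges => s cs; apply/R_hits/cycle_edge_setsP; exists s.
have forest_H := forest_card_edges (remove_edges_sym R e_sym) (remove_edges_irr R e_irr) H_acyclic.
have card_H := card_edges_remove_edges e R.
have nonisolated_H := max_card (nonisolated (remove_edges e R)).
have bridges_sub : bridges e \subset edges e by apply/subsetP => E; rewrite inE => /andP[].
have card_bridges := subset_leq_card bridges_sub.
have card_NB := card_nonbridges e_sym e_irr cac.
rewrite cardsD (setIidPr bridges_sub) in card_NB.
have cycles_sum : 4 * #|cycle_edge_sets e| <= \sum_(C in cycle_edge_sets e) #|C|.
  by rewrite mulnC -sum_nat_const; apply: leq_sum => C /(bipartite_cycle_edge_set bip) [].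
have even_sum : 2 %| \sum_(C in cycle_edge_sets e) #|C|.
  by apply: dvdn_sum => C /(bipartite_cycle_edge_set bip) [].
have := @leq_double_div3 _ _ (#|T| - 1 - #|bridges e|) even_sum cycles_sum.
lia.
Qed.
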